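(* Let $n\ge 5$, $q>5$, and let $u\in C^{6}(\mathbb{R}^{n})$, $u>0$, be a radially symmetric solution of $\Delta^{3}u=u^{-q}$ in $\mathbb{R}^{n}$ such that $\liminf_{|x|\to+\infty}u(x)/|x|\in(0,+\infty]$ and $\lim_{r\to+\infty}u''(r)=\rho\in\mathbb{R}$ exists. Then $\rho\ge 0$. If $\rho>0$, then $\lim_{|x|\to+\infty}u(x)/|x|^{2}=\rho/2$. If $\rho=0$, then $$\lim_{|x|\to+\infty}\frac{u(x)}{|x|}=-\frac{1}{n-1}\int_{0}^{+\infty}t^{2}\Big(\Delta^{2}\bar u(t)-\frac{n-3}{t}(\Delta\bar u)'(t)\Big)dt\in(0,+\infty).$$
   Context: $u(r)$ denotes $u(x)$ with $r=|x|$; $\bar u(r)$ is the spherical average of $u$ over $\partial B_r(0)$ (equal to $u(r)$ here), and $\Delta\bar u$, $\Delta^{2}\bar u$ are the radial Laplacians, $\Delta f(r)=r^{1-n}(r^{n-1}f'(r))'$. *)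

From HB Require Import structures.
From mathcomp Require Import all_boot all_order all_algebra.
From mathcomp Require Import all_classical all_reals all_analysis.
Set Implicit Arguments. Unset Strict Implicit. Unset Printing Implicit Defensive.
Import Order.TTheory GRing.Theory Num.Theory.
Import numFieldNormedType.Exports.
Local Open Scope ring_scope.

Section Defs.
Variable R : realType.

Definition ebasis n (i : 'I_n) : 'rV[R]_n := \row_j (i == j)%:R.

(* first basis vector e_1 (= 0 if n = 0) *)
Definition e1 n : 'rV[R]_n := \row_j (nat_of_ord j == 0)%N%:R.

Definition enorm n (x : 'rV[R]_n) : R := Num.sqrt (\sum_i (x ord0 i) ^+ 2).

Definition partial n (i : 'I_n) (f : 'rV[R]_n -> R) : 'rV[R]_n -> R :=
  fun x => 'D_(ebasis i) f x.

Definition lap n (f : 'rV[R]_n -> R) : 'rV[R]_n -> R :=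
  fun x => \sum_i partial i (partial i f) x.

Fixpoint Ck n (k : nat) (f : 'rV[R]_n -> R) : Prop :=
  match k with
  | 0%N => continuous f
  | k'.+1 => continuous f /\ (forall i x, derivable f x (ebasis i)) /\
             (forall i, Ck k' (partial i f))
  end.

Definition radlap (n : nat) (f : R -> R) : R -> R :=
  fun r => (r ^+ n.-1)^-1 * derive1 (fun s => s ^+ n.-1 * derive1 f s) r.

End Defs.

From HB Require Import structures.
From mathcomp Require Import all_boot all_order all_algebra.
From mathcomp Require Import all_classical all_reals all_analysis.
From mathcomp.algebra_tactics Require Import ring lra.
Import Order.TTheory GRing.Theory Num.Theory.
Import numFieldNormedType.Exports.
Local Open Scope ring_scope.
Local Open Scope classical_set_scope.

Set Implicit Arguments. Unset Strict Implicit.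

(* Write P0 = u, P1 = Delta u, P2 = Delta^2 u and F = u^(-q) for the radial profiles and
   k = n - 1, so that (r^k P_i')' = r^k P_(i+1).  L'Hopital's rule turns u'' -> rho into
   u / r^2 -> rho / 2, and rho >= 0 since u grows at least linearly.
   When rho = 0, also P1 -> 0.  The flux r^k P2' increases (its derivative is r^k F > 0) and
   vanishes at the origin, so P2 increases; P2 <= 0 and P2 -> 0, for otherwise P1 would grow
   quadratically.  As F <= (c r)^(-q) with q > 5, the flux r^4 P2' converges, and L'Hopital's
   rule carries its limit down the chain r^3 P2, r^2 P1', r P1, P0', P0 / r.  Finally
   t^2 (P2 - (k - 2) / t P1') is the derivative of t^2 P1', which identifies the limit of
   r^2 P1' with the improper integral. *)

Section Calculus.
Variable R : realType.
Implicit Types (f g : R -> R) (x a L : R).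

Definition has_derive1 f x d := derivable f x 1 /\ derive1 f x = d.

Lemma derivable_has_derive1 f x : derivable f x 1 -> has_derive1 f x (derive1 f x).
Proof. by []. Qed.

Lemma has_derive1D f g x a b : has_derive1 f x a -> has_derive1 g x b ->
  has_derive1 (fun t => f t + g t) x (a + b).
Proof.
move=> [df <-] [dg <-]; split; first exact: derivableD.
by rewrite !derive1E deriveD.
Qed.

Lemma has_derive1N f x a : has_derive1 f x a -> has_derive1 (fun t => - f t) x (- a).
Proof.
move=> [df <-]; split; first exact: derivableN.
by rewrite !derive1E deriveN.
Qed.

Lemma has_derive1B f g x a b : has_derive1 f x a -> has_derive1 g x b ->
  has_derive1 (fun t => f t - g t) x (a - b).
Proof. by move=> hf hg; apply: has_derive1D hf (has_derive1N hg). Qed.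

Lemma has_derive1M f g x a b : has_derive1 f x a -> has_derive1 g x b ->
  has_derive1 (fun t => f t * g t) x (a * g x + f x * b).
Proof.
move=> [df <-] [dg <-]; split; first exact: derivableM.
by rewrite !derive1E deriveM // /GRing.scale /=; ring.
Qed.

Lemma has_derive1_cst c x : has_derive1 (fun=> c) x 0.
Proof. split; [exact: derivable_cst | exact: derive1_cst]. Qed.

Lemma has_derive1_id x : has_derive1 id x 1.
Proof. split; [exact: derivable_id | by rewrite derive1E derive_id]. Qed.

Lemma has_derive1Ml c f x a : has_derive1 f x a ->
  has_derive1 (fun t => c * f t) x (c * a).
Proof. by move=> /(has_derive1M (has_derive1_cst c x)); rewrite mul0r add0r. Qed.

Lemma has_derive1_comp f g x a b : has_derive1 f x a -> has_derive1 g (f x) b ->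
  has_derive1 (fun t => g (f t)) x (b * a).
Proof.
move=> [df <-] [dg <-]; split; last by rewrite (derive1_comp df dg).
by apply/derivable1_diffP/differentiable_comp; exact/derivable1_diffP.
Qed.

Lemma has_derive1V f x a : f x != 0 -> has_derive1 f x a ->
  has_derive1 (fun t => (f t)^-1) x (- a / f x ^+ 2).
Proof.
move=> fx0 [df <-]; split; first exact: derivableV.
by rewrite !derive1E deriveV // /GRing.scale /=; ring.
Qed.

Lemma has_derive1X k x : has_derive1 (fun t => t ^+ k) x (k%:R * x ^+ k.-1).
Proof. by split; [exact: exprn_derivable | rewrite exp_derive1]. Qed.

Lemma has_derive1_sqrt x : 0 < x -> has_derive1 Num.sqrt x (2 * Num.sqrt x)^-1.
Proof.
by move=> /is_derive1_sqrt h; split; [exact: ex_derive | rewrite derive1E derive_val].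
Qed.

Lemma has_derive1_powR a x : 0 < x ->
  has_derive1 (fun t => t `^ a) x (a * x `^ (a - 1)).
Proof.
by move=> /(is_derive1_powR a) h; split; [exact: ex_derive | rewrite derive1E derive_val].
Qed.

Lemma has_derive1_near f g x d : {near x, f =1 g} ->
  has_derive1 f x d -> has_derive1 g x d.
Proof.
move=> fg [df <-]; split; first exact: near_eq_derivable df.
by rewrite !derive1E (near_eq_derive _ fg).
Qed.

Lemma derive1_near f g x : {near x, f =1 g} -> derive1 f x = derive1 g x.
Proof. by move=> fg; rewrite !derive1E; apply: near_eq_derive. Qed.

Lemma derive1_ge0_le f a : (forall x, a < x -> derivable f x 1) ->
  (forall x, a < x -> 0 <= derive1 f x) -> forall x y, a < x -> x <= y -> f x <= f y.
Proof.
move=> df d0 x y ax xy.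
apply: (@ger0_derive1_ndecr R f x y) => //.
- by move=> z; rewrite in_itv /= => /andP[xz _]; apply/df/(lt_trans ax).
- by move=> z; rewrite in_itv /= => /andP[xz _]; apply/d0/(lt_trans ax).
- apply: derivable_within_continuous => z; rewrite in_itv /= => /andP[xz _].
  exact/df/(lt_le_trans ax).
Qed.

Lemma derive1_gt0_lt f a : (forall x, a < x -> derivable f x 1) ->
  (forall x, a < x -> 0 < derive1 f x) -> forall x y, a < x -> x < y -> f x < f y.
Proof.
move=> df d0 x y ax xy.
apply: (@gtr0_derive1_lt_cc R f x y) => //.
- by move=> z; rewrite in_itv /= => /andP[xz _]; apply/df/(lt_trans ax).
- by move=> z; rewrite in_itv /= => /andP[xz _]; apply/d0/(lt_trans ax).
- apply: derivable_within_continuous => z; rewrite in_itv /= => /andP[xz _].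
  exact/df/(lt_le_trans ax).
- by rewrite in_itv /= lexx ltW.
- by rewrite in_itv /= lexx ltW.
Qed.

Definition tends_to f L :=
  forall e, 0 < e -> exists M, forall r, M < r -> `|f r - L| < e.

Definition tends_to_pinfty f := forall B, exists M, forall r, M < r -> B < f r.

Lemma tends_toE f L : tends_to f L <-> f r @[r --> +oo] --> L.
Proof.
split => [h|/cvgrPdist_lt h e /h[M [_ hM]]]; last first.
  by exists M => r /hM; rewrite distrC.
apply/cvgrPdist_lt => e /h[M hM]; exists M; split; first exact: num_real.
by move=> r /hM; rewrite distrC.
Qed.

Lemma tends_to_eq f g L a : (forall r, a < r -> f r = g r) ->
  tends_to f L -> tends_to g L.
Proof.
move=> fg h e /h[M hM]; exists (Num.max M a) => r.
by rewrite gt_max => /andP[/hM + ar]; rewrite fg.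
Qed.

Lemma tends_toD f g a b : tends_to f a -> tends_to g b ->
  tends_to (fun r => f r + g r) (a + b).
Proof. by move=> /tends_toE hf /tends_toE hg; apply/tends_toE; apply: cvgD. Qed.

Lemma tends_toM f g a b : tends_to f a -> tends_to g b ->
  tends_to (fun r => f r * g r) (a * b).
Proof. by move=> /tends_toE hf /tends_toE hg; apply/tends_toE; apply: cvgM. Qed.

Lemma tends_to_cst c : tends_to (fun=> c) c.
Proof. by move=> e e0; exists 0 => r _; rewrite subrr normr0. Qed.

Lemma tends_toMl c f a : tends_to f a -> tends_to (fun r => c * f r) (c * a).
Proof. exact/tends_toM/tends_to_cst. Qed.

Lemma tends_toN f a : tends_to f a -> tends_to (fun r => - f r) (- a).
Proof. by move=> h e /h[M hM]; exists M => r /hM; rewrite -opprD normrN. Qed.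

Lemma lt_max_addr1 (M a : R) : M < Num.max M a + 1 /\ a < Num.max M a + 1.
Proof. by split; apply: (@le_lt_trans _ _ (Num.max M a)); rewrite ?le_max ?lexx ?orbT ?ltrDl. Qed.

Lemma tends_to_ge f L a c : tends_to f L -> (forall r, a < r -> c <= f r) -> c <= L.
Proof.
move=> h hc; rewrite leNgt; apply/negP => Lc.
have [M hM] := h (c - L) (ltac:(by rewrite subr_gt0)).
have [/hM Mr /hc ar] := lt_max_addr1 M a.
by move: Mr; rewrite ltr_norml => /andP[_]; lra.
Qed.

Lemma tends_to_pinfty_ge f B : tends_to_pinfty f ->
  exists M, forall r, M < r -> B <= f r.
Proof. by move=> /(_ B)[M hM]; exists M => r /hM /ltW. Qed.

Lemma tends_to_pinfty_exp k : (0 < k)%N -> tends_to_pinfty (fun r => r ^+ k).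
Proof.
move=> k0 B; exists (Num.max B 1) => r; rewrite gt_max => /andP[Br r1].
by apply: (lt_le_trans Br); apply: ler_eXnr => //; apply: ltW.
Qed.

Lemma tends_to_pinfty_powR a : 0 < a -> tends_to_pinfty (fun r => r `^ a).
Proof.
move=> a0 B; pose b := Num.max B 1.
have b1 : 1 <= b by rewrite le_max lexx orbT.
have bE : (b `^ a^-1) `^ a = b.
  by rewrite -powRrM mulVf ?gt_eqF // powRr1 // (le_trans ler01).
exists (b `^ a^-1) => r hr; apply: (@le_lt_trans _ _ b); first by rewrite le_max lexx.
rewrite -{1}bE; apply: gt0_ltr_powR => //; rewrite ?nnegrE ?powR_ge0 //.
by apply: le_trans (ltW hr); rewrite powR_ge0.
Qed.

Lemma tends_to_pinfty_inv g : tends_to_pinfty g -> tends_to (fun r => (g r)^-1) 0.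
Proof.
move=> gi e e0; have [M hM] := gi e^-1; exists M => r /hM ge.
have g0 : 0 < g r by apply: lt_trans ge; rewrite invr_gt0.
by rewrite subr0 gtr0_norm ?invr_gt0 // invf_plt ?posrE // invr_gt0.
Qed.

Lemma tends_to_squeeze0 f g a : tends_to g 0 ->
  (forall r, a < r -> 0 <= f r <= g r) -> tends_to f 0.
Proof.
move=> tg hfg e /tg[M hM]; exists (Num.max M a) => r.
rewrite gt_max => /andP[/hM + /hfg /andP[f0 fg]].
by rewrite !subr0 !ger0_norm ?(le_trans f0 fg) //; apply: le_lt_trans.
Qed.

Lemma nondecr_le_tends_to h a l : (forall x y, a < x -> x <= y -> h x <= h y) ->
  tends_to h l -> forall x, a < x -> h x <= l.
Proof.
move=> hi hl x ax.
by apply: (tends_to_ge (a := x) hl) => r /ltW; apply: hi.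
Qed.

Lemma tends_to0_at0 f k : {for 0, continuous f} ->
  forall e, 0 < e -> exists d, 0 < d /\
    forall r, 0 < r -> r < d -> `|r ^+ k.+1 * f r| < e.
Proof.
move=> cf e e0.
have : {for 0, continuous (fun t : R => t ^+ k.+1 * f t)}.
  by apply: cvgM; [exact: exprn_continuous | exact: cf].
move=> /cvgrPdist_lt /(_ e e0) /nbhs_ballP [d d0 hd].
exists d; split => // r r0 rd.
have := hd r; rewrite /ball /= expr0n /= mul0r !sub0r !normrN; apply.
by rewrite gtr0_norm.
Qed.

Lemma nondecr_bounded_tends_to h a B :
  (forall x y, a < x -> x <= y -> h x <= h y) -> (forall x, a < x -> h x <= B) ->
  exists l, tends_to h l.
Proof.
move=> hi hB; pose b := a + 1; have ab : a < b by rewrite ltrDl.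
pose ht t := h (Num.max t b).
have ht_nd : {homo ht : x y / x <= y}.
  move=> x y xy; apply: hi; first by rewrite lt_max ab orbT.
  by rewrite ge_max !le_max xy lexx orbT.
have ht_ub : has_ubound (range ht).
  by exists B => _ [x _ <-]; apply: hB; rewrite lt_max ab orbT.
exists (sup (range ht)); have /tends_toE := nondecreasing_cvgr ht_nd ht_ub.
by apply: (tends_to_eq (a := b)) => r /ltW br; rewrite /ht (max_idPl br).
Qed.

End Calculus.

Section LHopital.
Variable R : realType.
Implicit Types (f g H P : R -> R) (a L : R).

Lemma eventually_ge_of_derive1_ge f g a m m' :
  (forall r, a < r -> derivable f r 1) -> (forall r, a < r -> derivable g r 1) ->
  (forall r, a < r -> m * derive1 g r <= derive1 f r) ->
  tends_to_pinfty g -> m' < m -> exists M, forall r, M < r -> m' * g r <= f r.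
Proof.
move=> df dg hfg gi mm.
have hd r : a < r -> has_derive1 (fun t => f t - m * g t) r
    (derive1 f r - m * derive1 g r).
  move=> ar; apply: has_derive1B; first exact: derivable_has_derive1 (df r ar).
  exact/has_derive1Ml/derivable_has_derive1/dg.
have hinc : forall x y, a < x -> x <= y -> f x - m * g x <= f y - m * g y.
  apply: derive1_ge0_le => r ar; first by have [] := hd r ar.
  by have [_ ->] := hd r ar; rewrite subr_ge0 hfg.
pose C := f (a + 1) - m * g (a + 1).
have mm0 : 0 < m - m' by rewrite subr_gt0.
have [M hM] := tends_to_pinfty_ge (`|C| / (m - m')) gi.
exists (Num.max M (a + 1)) => r; rewrite gt_max => /andP[/hM Cg ar].
have a1 : a < a + 1 by rewrite ltrDl.
have := hinc (a + 1) r a1 (ltW ar); rewrite -/C => Cle.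
have : `|C| <= (m - m') * g r by rewrite mulrC -ler_pdivrMr.
have : - `|C| <= C by rewrite lerNl -normrN ler_norm.
lra.
Qed.

Lemma eventually_le_of_derive1_le f g a m m' :
  (forall r, a < r -> derivable f r 1) -> (forall r, a < r -> derivable g r 1) ->
  (forall r, a < r -> derive1 f r <= m * derive1 g r) ->
  tends_to_pinfty g -> m < m' -> exists M, forall r, M < r -> f r <= m' * g r.
Proof.
move=> df dg hfg gi mm.
have hN r : a < r -> has_derive1 (fun t => - f t) r (- derive1 f r).
  by move=> ar; apply/has_derive1N/derivable_has_derive1/df.
have hNfg r : a < r -> - m * derive1 g r <= derive1 (fun t => - f t) r.
  by move=> ar; rewrite (hN r ar).2 mulNr lerN2 hfg.
have [M hM] := eventually_ge_of_derive1_ge (fun r ar => (hN r ar).1) dg hNfg gi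
  (ltac:(by rewrite ltrN2) : - m' < - m).
by exists M => r /hM; rewrite mulNr lerN2.
Qed.

Lemma tends_to_ratio_bounds (x y L e : R) : `|x / y - L| < e ->
  [/\ 0 < y -> (L - e) * y <= x <= (L + e) * y
    & y < 0 -> (L + e) * y <= x <= (L - e) * y].
Proof.
rewrite ltr_norml => /andP[h1 h2]; split => y0.
  by rewrite -[x](divfK (lt0r_neq0 y0)) !ler_pM2r //; apply/andP; split; lra.
by rewrite -[x](divfK (ltr0_neq0 y0)) !ler_nM2r //; apply/andP; split; lra.
Qed.

Lemma lhopital_pinfty f g a L :
  (forall r, a < r -> derivable f r 1) -> (forall r, a < r -> derivable g r 1) ->
  (forall r, a < r -> 0 < derive1 g r) -> tends_to_pinfty g ->
  tends_to (fun r => derive1 f r / derive1 g r) L ->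
  tends_to (fun r => f r / g r) L.
Proof.
move=> df dg g0 gi h e e0.
have [M1 hM1] := h (e / 2) (ltac:(by rewrite divr_gt0)).
pose a' := Num.max a M1.
have aa r : a' < r -> a < r /\ M1 < r by rewrite gt_max => /andP[].
have df' r : a' < r -> derivable f r 1 by move=> /aa[+ _]; apply: df.
have dg' r : a' < r -> derivable g r 1 by move=> /aa[+ _]; apply: dg.
have key r : a' < r -> (L - e / 2) * derive1 g r <= derive1 f r <= (L + e / 2) * derive1 g r.
  by move=> /aa[ar /hM1 /tends_to_ratio_bounds[+ _]]; apply; apply: g0.
have [M2 hM2] := eventually_ge_of_derive1_ge df' dg' (fun r ar => (andP (key r ar)).1) gi
  (ltac:(lra) : L - e * (3/4) < L - e / 2).
have [M3 hM3] := eventually_le_of_derive1_le df' dg' (fun r ar => (andP (key r ar)).2) gi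
  (ltac:(lra) : L + e / 2 < L + e * (3/4)).
have [M4 hM4] := gi 0.
exists (Num.max (Num.max M2 M3) M4) => r; rewrite !gt_max => /andP[/andP[r2 r3] r4].
have gr := hM4 r r4; have l1 := hM2 r r2; have l2 := hM3 r r3.
have T1 : L - e * (3/4) <= f r / g r by rewrite ler_pdivlMr.
have T2 : f r / g r <= L + e * (3/4) by rewrite ler_pdivrMr.
rewrite ltr_norml; apply/andP; split; lra.
Qed.

Lemma derive1_lt0_tends_to0_gt0 g a :
  (forall r, a < r -> derivable g r 1) -> (forall r, a < r -> derive1 g r < 0) ->
  tends_to g 0 -> forall r, a < r -> 0 < g r.
Proof.
move=> dg g0 gl r ar.
have hN r' : a < r' -> has_derive1 (fun t => - g t) r' (- derive1 g r').
  by move=> ar'; apply/has_derive1N/derivable_has_derive1/dg.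
have dN r' : a < r' -> derivable (fun t => - g t) r' 1 by move=> /hN[].
have sinc := derive1_gt0_lt dN (fun r' ar' => ltac:(by rewrite (hN r' ar').2 oppr_gt0 g0)).
have inc x y : a < x -> x <= y -> - g x <= - g y.
  by move=> ax; rewrite le_eqVlt => /predU1P[-> //|xy]; apply/ltW/sinc.
have ar1 : a < r + 1 by apply: (lt_trans ar); rewrite ltrDl.
have := nondecr_le_tends_to inc (tends_toN gl) ar1; rewrite oppr0 oppr_le0 => g1.
by apply: (le_lt_trans g1); rewrite -ltrN2; apply: sinc => //; rewrite ltrDl.
Qed.

Lemma lhopital_zero f g a L :
  (forall r, a < r -> derivable f r 1) -> (forall r, a < r -> derivable g r 1) ->
  (forall r, a < r -> derive1 g r < 0) -> tends_to f 0 -> tends_to g 0 ->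
  tends_to (fun r => derive1 f r / derive1 g r) L ->
  tends_to (fun r => f r / g r) L.
Proof.
move=> df dg g0 f0 gl h e e0.
have [M1 hM1] := h (e / 2) (ltac:(by rewrite divr_gt0)).
pose a' := Num.max a M1.
have aa r : a' < r -> a < r /\ M1 < r by rewrite gt_max => /andP[].
have key r : a' < r ->
    (L + e / 2) * derive1 g r <= derive1 f r <= (L - e / 2) * derive1 g r.
  by move=> /aa[ar /hM1 /tends_to_ratio_bounds[_]]; apply; apply: g0.
have le0 k d : (forall r, a < r -> has_derive1 k r (d r)) ->
    (forall r, a' < r -> 0 <= d r) -> tends_to k 0 -> forall r, a' < r -> k r <= 0.
  move=> hh d0 t0 r ar; apply: (nondecr_le_tends_to _ t0 ar).
  apply: derive1_ge0_le => s ar'; have [dk dkE] := hh s (aa s ar').1 => //.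
  by rewrite dkE d0.
have hdf r : a < r -> has_derive1 f r (derive1 f r).
  by move=> /df; exact: derivable_has_derive1.
have hdg r c : a < r -> has_derive1 (fun t => c * g t) r (c * derive1 g r).
  by move=> /dg /derivable_has_derive1; exact: has_derive1Ml.
have u1 := le0 _ _ (fun r ar => has_derive1B (hdf r ar) (hdg r (L + e / 2) ar))
  (fun r ar => ltac:(by rewrite subr_ge0; case/andP: (key r ar)))
  (ltac:(by rewrite -[0](subr0 0) -{2}(mulr0 (L + e / 2));
                apply: tends_toD f0 (tends_toN (tends_toMl _ gl)))).
have u2 := le0 _ _ (fun r ar => has_derive1B (hdg r (L - e / 2) ar) (hdf r ar))
  (fun r ar => ltac:(by rewrite subr_ge0; case/andP: (key r ar)))
  (ltac:(by rewrite -[0](subr0 0) -{1}(mulr0 (L - e / 2));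
                apply: tends_toD (tends_toMl _ gl) (tends_toN f0))).
exists a' => r ar; have := u1 r ar; have := u2 r ar => v2 v1.
have gr := derive1_lt0_tends_to0_gt0 dg g0 gl (aa r ar).1.
have T1 : L - e / 2 <= f r / g r by rewrite ler_pdivlMr //; lra.
have T2 : f r / g r <= L + e / 2 by rewrite ler_pdivrMr //; lra.
rewrite ltr_norml; apply/andP; split; lra.
Qed.

Lemma lhopital_pow (m : nat) H L : (forall r, 0 < r -> derivable H r 1) ->
  tends_to (fun r => derive1 H r / r ^+ m) L ->
  tends_to (fun r => H r / r ^+ m.+1) (L / m.+1%:R).
Proof.
move=> dH hL; have hX (r : R) := has_derive1X m.+1 r.
apply: (lhopital_pinfty (a := 0)) => //.
- by move=> r _; case: (hX r).
- by move=> r r0; rewrite (hX r).2 mulr_gt0 ?exprn_gt0 ?ltr0n.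
- exact: tends_to_pinfty_exp.
have := tends_toMl (m.+1%:R)^-1 hL; rewrite mulrC.
apply: (tends_to_eq (a := 0)) => r r0; rewrite (hX r).2 /=.
by field; rewrite expf_neq0 ?lt0r_neq0 // addrC natr1 pnatr_eq0.
Qed.

Lemma lhopital0_pow (k : nat) P L : (forall r, 0 < r -> derivable P r 1) ->
  tends_to P 0 -> tends_to (fun r => r ^+ k.+2 * derive1 P r) L ->
  tends_to (fun r => r ^+ k.+1 * P r) (- L / k.+1%:R).
Proof.
move=> dP P0 hL.
have hV (r : R) : 0 < r -> has_derive1 (fun t => (t ^+ k.+1)^-1) r
    (- (k.+1%:R * r ^+ k) / (r ^+ k.+1) ^+ 2).
  by move=> r0; apply: has_derive1V (has_derive1X k.+1 r); rewrite expf_neq0 // lt0r_neq0.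
have hV0 (r : R) : 0 < r -> derive1 (fun t => (t ^+ k.+1)^-1) r < 0.
  by move=> r0; rewrite (hV r r0).2 mulNr oppr_lt0 divr_gt0 ?mulr_gt0 ?exprn_gt0 ?ltr0n.
have := lhopital_zero dP (fun r r0 => (hV r r0).1) hV0 P0
  (tends_to_pinfty_inv (tends_to_pinfty_exp (ltn0Sn k))).
have ratio : tends_to (fun r => derive1 P r / derive1 (fun t => (t ^+ k.+1)^-1) r)
    (- L / k.+1%:R).
  have := tends_toMl (- (k.+1%:R)^-1) hL.
  rewrite (_ : - _ * L = - L / k.+1%:R); last by rewrite mulrC mulrN mulNr.
  apply: (tends_to_eq (a := 0)) => r r0; rewrite (hV r r0).2.
  have -> : (r ^+ k.+1) ^+ 2 = r ^+ k * r ^+ k.+2.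
    by rewrite -exprM -exprD muln2 -addnn addSn !addnS.
  by field; rewrite !expf_neq0 ?lt0r_neq0 // addrC natr1 pnatr_eq0.
move=> /(_ _ ratio); apply: (tends_to_eq (a := 0)) => r _.
by rewrite invrK mulrC.
Qed.

Lemma lhopital_flux (m q : nat) Z Y L :
  (forall r, 0 < r ->
    has_derive1 (fun t => t ^+ (q + m.+1) * Z t) r (r ^+ (q.+1 + m) * Y r)) ->
  tends_to (fun r => r ^+ q.+1 * Y r) L -> tends_to (fun r => r ^+ q * Z r) (L / m.+1%:R).
Proof.
move=> hH hY; have := lhopital_pow (fun r r0 => (hH r r0).1) (m := m) (L := L).
have r0n (r : R) : 0 < r -> forall i, r ^+ i != 0 by move=> r0 i; rewrite expf_neq0 ?lt0r_neq0.
have hY' : tends_to (fun r => derive1 (fun t => t ^+ (q + m.+1) * Z t) r / r ^+ m) L.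
  apply: (tends_to_eq (a := 0)) hY => r r0; rewrite (hH r r0).2 exprD.
  by field; rewrite r0n.
move=> /(_ hY'); apply: (tends_to_eq (a := 0)) => r r0; rewrite exprD.
by field; rewrite r0n.
Qed.

End LHopital.

Section RadialFlux.
Variable R : realType.
Implicit Types (P Q D S : R -> R) (a r : R).

Definition derivable2_pos P :=
  forall r, 0 < r -> derivable P r 1 /\ derivable (derive1 P) r 1.

(* [Q] is the radial Laplacian of [P] in dimension [k + 1]. *)
Definition is_radlap (k : nat) P Q :=
  forall r, 0 < r -> Q r = derive1 (derive1 P) r + k%:R / r * derive1 P r.

Lemma has_derive1_flux (k : nat) Q r : (0 < k)%N -> 0 < r ->
  derivable (derive1 Q) r 1 ->
  has_derive1 (fun t => t ^+ k * derive1 Q t) r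
    (r ^+ k * (derive1 (derive1 Q) r + k%:R / r * derive1 Q r)).
Proof.
case: k => // k _ r0 dQ; have := has_derive1M (has_derive1X k.+1 r) (derivable_has_derive1 dQ).
by congr has_derive1; rewrite exprS /=; field; exact: lt0r_neq0.
Qed.

Lemma has_derive1_flux_radlap (k : nat) P Q r : (0 < k)%N -> derivable2_pos P ->
  is_radlap k P Q -> 0 < r -> has_derive1 (fun t => t ^+ k * derive1 P t) r (r ^+ k * Q r).
Proof. by move=> k0 dP PQ r0; rewrite PQ //; apply: has_derive1_flux => //; case: (dP r r0). Qed.

Lemma flux_lb_eventually_ge (k : nat) D S a eps : 0 < eps -> 0 <= a ->
  (forall r, a < r -> has_derive1 (fun t => t ^+ k * D t) r (r ^+ k * S r)) ->
  (forall r, a < r -> eps <= S r) ->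
  exists M, forall r, M < r -> eps / k.+1%:R / 2 * r <= D r.
Proof.
move=> e0 a0 hH hS; pose m := eps / k.+1%:R.
have m0 : 0 < m by rewrite divr_gt0 ?ltr0n.
have cmp r : a < r -> m * derive1 (fun t => t ^+ k.+1) r <= derive1 (fun t => t ^+ k * D t) r.
  move=> ar; have r0 : 0 < r by apply: le_lt_trans ar.
  rewrite (hH r ar).2 (has_derive1X k.+1 r).2 /= mulrA /m divfK ?pnatr_eq0 //.
  by rewrite mulrC ler_pM2l ?exprn_gt0 // hS.
have [M hM] := eventually_ge_of_derive1_ge (fun r ar => (hH r ar).1)
  (fun r _ => (has_derive1X k.+1 r).1) cmp (tends_to_pinfty_exp (ltn0Sn k))
  (ltac:(lra) : m / 2 < m).
exists (Num.max M a) => r; rewrite gt_max => /andP[/hM + ar].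
have r0 : 0 < r by apply: le_lt_trans ar.
by rewrite exprS mulrA [r ^+ k * _]mulrC ler_pM2r ?exprn_gt0.
Qed.

(* If the flux [t^k Q'] grows at least like [eps t^k], then [Q] grows quadratically. *)
Lemma not_tends_to0_of_flux_lb (k : nat) Q D S a eps : 0 < eps -> 0 <= a ->
  (forall r, a < r -> has_derive1 Q r (D r)) ->
  (forall r, a < r -> has_derive1 (fun t => t ^+ k * D t) r (r ^+ k * S r)) ->
  (forall r, a < r -> eps <= S r) -> ~ tends_to Q 0.
Proof.
move=> e0 a0 hQ hH hS tQ; pose m := eps / k.+1%:R / 2.
have m0 : 0 < m by rewrite !divr_gt0 ?ltr0n.
have [M1 hD] := flux_lb_eventually_ge e0 a0 hH hS; pose a2 := Num.max M1 a.
have a2a r : a2 < r -> a < r /\ M1 < r by rewrite gt_max => /andP[].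
have cmp r : a2 < r -> m / 2 * derive1 (fun t => t ^+ 2) r <= derive1 Q r.
  move=> /a2a[ar /hD]; rewrite (hQ r ar).2 (has_derive1X 2 r).2 /= expr1.
  by rewrite mulrA divfK ?pnatr_eq0.
have [M2 hM2] := eventually_ge_of_derive1_ge (fun r ar => (hQ r (a2a r ar).1).1)
  (fun r _ => (has_derive1X 2 r).1) cmp (tends_to_pinfty_exp (isT : (0 < 2)%N))
  (ltac:(lra) : m / 4 < m / 2).
have [M3 hM3] := tQ 1 ltr01.
have [M4 hM4] := tends_to_pinfty_exp (isT : (0 < 2)%N) (4 / m).
have [+ r4] := lt_max_addr1 (Num.max M2 M3) M4; rewrite gt_max => /andP[r2 r3].
move: (hM2 _ r2) (hM3 _ r3) (hM4 _ r4); set r := _ + 1; rewrite subr0 => Q2 Q1 r2m.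
have : 4 / m * (m / 4) < r ^+ 2 * (m / 4) by rewrite ltr_pM2r // divr_gt0.
rewrite (_ : 4 / m * (m / 4) = 1); last by field; exact: lt0r_neq0.
have := le_lt_trans (ler_norm (Q r)) Q1; rewrite mulrC; lra.
Qed.

Lemma tends_to_derive1_ratios P rho : derivable2_pos P ->
  tends_to (derive1 (derive1 P)) rho ->
  tends_to (fun r => derive1 P r / r) rho /\ tends_to (fun r => P r / r ^+ 2) (rho / 2).
Proof.
move=> dP h2.
have dP0 r : 0 < r -> derivable P r 1 by case/dP.
have dP1 r : 0 < r -> derivable (derive1 P) r 1 by case/dP.
have h1 : tends_to (fun r => derive1 P r / r) rho.
  have h2' : tends_to (fun r => derive1 (derive1 P) r / r ^+ 0) rho.
    by apply: (tends_to_eq (a := 0)) h2 => r _; rewrite expr0 divr1.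
  have := lhopital_pow dP1 h2'; rewrite divr1.
  by apply: (tends_to_eq (a := 0)) => r _; rewrite expr1.
split => //; apply: lhopital_pow dP0 _.
by apply: (tends_to_eq (a := 0)) h1 => r _; rewrite expr1.
Qed.

Lemma radlapE (k : nat) Q r : (0 < k)%N -> 0 < r -> derivable (derive1 Q) r 1 ->
  radlap k.+1 Q r = derive1 (derive1 Q) r + k%:R / r * derive1 Q r.
Proof.
move=> k0 r0 dQ; rewrite /radlap /= (has_derive1_flux k0 r0 dQ).2 mulrA mulVf ?mul1r //.
by rewrite expf_neq0 // lt0r_neq0.
Qed.

Section RadlapProfiles.
Variables (k : nat) (P Q S : R -> R).
Hypotheses (k_gt0 : (0 < k)%N) (dP : derivable2_pos P) (dQ : derivable2_pos Q).
Hypotheses (PQ : is_radlap k P Q) (QS : is_radlap k Q S).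

Lemma radlap_pos r : 0 < r -> radlap k.+1 P r = Q r.
Proof. by move=> r0; rewrite radlapE // ?PQ //; case: (dP r0). Qed.

Lemma derive1_radlap_pos r : 0 < r -> derive1 (radlap k.+1 P) r = derive1 Q r.
Proof.
move=> r0; apply: derive1_near; near=> s; apply: radlap_pos.
by near: s; exact: lt_nbhsr.
Unshelve. all: by end_near.
Qed.

Lemma radlap2_pos r : 0 < r -> radlap k.+1 (radlap k.+1 P) r = S r.
Proof.
move=> r0; rewrite QS // -(radlapE k_gt0 r0); last by case: (dQ r0).
rewrite /radlap; congr (_ * _); apply: derive1_near; near=> s.
by rewrite derive1_radlap_pos //; near: s; exact: lt_nbhsr.
Unshelve. all: by end_near.
Qed.

End RadlapProfiles.

End RadialFlux.

Section RadialSystem.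
Variable R : realType.
Variables (j : nat) (P0 P1 P2 F : R -> R).
Local Notation k := j.+4.
Hypotheses (dP0 : derivable2_pos P0) (dP1 : derivable2_pos P1) (dP2 : derivable2_pos P2).
Hypotheses (P01 : is_radlap k P0 P1) (P12 : is_radlap k P1 P2) (P2F : is_radlap k P2 F).
Hypothesis F_gt0 : forall r, 0 < r -> 0 < F r.
Hypothesis flux2_at0 : forall e, 0 < e -> exists d, 0 < d /\
  forall r, 0 < r -> r < d -> `|r ^+ k * derive1 P2 r| < e.
Hypothesis P0''_to0 : tends_to (derive1 (derive1 P0)) 0.

Let hflux0 r : 0 < r -> has_derive1 (fun t => t ^+ k * derive1 P0 t) r (r ^+ k * P1 r).
Proof. exact: has_derive1_flux_radlap. Qed.
Let hflux1 r : 0 < r -> has_derive1 (fun t => t ^+ k * derive1 P1 t) r (r ^+ k * P2 r).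
Proof. exact: has_derive1_flux_radlap. Qed.
Let hflux2 r : 0 < r -> has_derive1 (fun t => t ^+ k * derive1 P2 t) r (r ^+ k * F r).
Proof. exact: has_derive1_flux_radlap. Qed.

Lemma P1_tends_to0 : tends_to P1 0.
Proof.
have [t1 _] := tends_to_derive1_ratios dP0 P0''_to0.
have := tends_toD P0''_to0 (tends_toMl k%:R t1); rewrite mulr0 addr0.
by apply: (tends_to_eq (a := 0)) => r r0; rewrite P01 //; field; exact: lt0r_neq0.
Qed.

(* The flux of [P2] increases and vanishes at the origin. *)
Lemma flux2_gt0 r : 0 < r -> 0 < r ^+ k * derive1 P2 r.
Proof.
pose G t := t ^+ k * derive1 P2 t.
have Ginc : forall x y, 0 < x -> x < y -> G x < G y.
  apply: derive1_gt0_lt => s s0; first exact: (hflux2 s0).1.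
  by rewrite (hflux2 s0).2 mulr_gt0 ?exprn_gt0 ?F_gt0.
move=> r0; rewrite ltNge; apply/negP => Gr.
have r20 : 0 < r / 2 by rewrite divr_gt0.
have G2 : G (r / 2) < 0 by apply: lt_le_trans Gr; apply: Ginc => //; lra.
have [d [d0 hd]] := flux2_at0 (ltac:(lra) : 0 < - G (r / 2)).
pose s := Num.min (d / 2) (r / 2).
have s0 : 0 < s by rewrite lt_min r20 divr_gt0.
have sd : s < d by rewrite gt_min; apply/orP; left; lra.
have Gs : G s <= G (r / 2).
  have : s <= r / 2 by rewrite ge_min lexx orbT.
  by rewrite le_eqVlt => /predU1P[-> //|/Ginc]; move/(_ s0)/ltW.
by have := hd s s0 sd; rewrite -/(G s) ltr_norml; lra.
Qed.

Lemma P2_nondecr x y : 0 < x -> x <= y -> P2 x <= P2 y.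
Proof.
apply: derive1_ge0_le => r r0; first by case: (dP2 r0).
by have := flux2_gt0 r0; rewrite pmulr_rgt0 ?exprn_gt0 // => /ltW.
Qed.

Lemma P2_le0 r : 0 < r -> P2 r <= 0.
Proof.
move=> r0; rewrite leNgt; apply/negP => P2r.
apply: (@not_tends_to0_of_flux_lb R k P1 (derive1 P1) P2 r (P2 r)) (P1_tends_to0) => //.
- exact: ltW.
- by move=> s /(lt_trans r0) s0; apply: derivable_has_derive1; case: (dP1 s0).
- by move=> s /(lt_trans r0); exact: hflux1.
- by move=> s /ltW; apply: P2_nondecr.
Qed.

Lemma P2_tends_to0 : tends_to P2 0.
Proof.
have near0 e : 0 < e -> exists r1, 0 < r1 /\ - e < P2 r1.
  move=> e0; apply: contrapT => Hn.
  apply: (@not_tends_to0_of_flux_lb R k (fun t => - P1 t) (fun t => - derive1 P1 t)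
     (fun t => - P2 t) 0 e) => //.
  - by move=> s s0; apply/has_derive1N/derivable_has_derive1; case: (dP1 s0).
  - move=> s s0; have -> : (fun t => t ^+ k * - derive1 P1 t) =
        (fun t => - (t ^+ k * derive1 P1 t)) by apply: funext => t; rewrite mulrN.
    by rewrite mulrN; apply/has_derive1N/hflux1.
  - by move=> s s0; rewrite lerNr leNgt; apply/negP => H; apply: Hn; exists s.
  - by rewrite -oppr0; apply/tends_toN/P1_tends_to0.
move=> e /near0[r1 [r10 hr1]]; exists r1 => r r1r.
have r0 : 0 < r by apply: lt_trans r1r.
have := P2_nondecr r10 (ltW r1r); have := P2_le0 r0.
by rewrite subr0 ltr_norml; lra.
Qed.

Hypothesis forcing_decay : tends_to (fun r => r ^+ 5 * F r) 0.
Hypothesis forcing_integrable : j = 0%N -> exists a (Phi : R -> R) B, 0 <= a /\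
  (forall r, a < r -> derivable Phi r 1 /\ r ^+ 4 * F r <= derive1 Phi r) /\
  (forall r, a < r -> Phi r <= B).

(* In the critical dimension [k = 4] the flux of [P2] is increasing and bounded;
   above it, L'Hopital's rule gives the limit [0]. *)
Lemma flux2_cvg : exists K, tends_to (fun r => r ^+ 4 * derive1 P2 r) K.
Proof.
case: (posnP j) => [j0 | /prednK jE]; last first.
  exists 0; rewrite -(mul0r j.-1.+1%:R^-1).
  apply: (@lhopital_flux R j.-1 4 _ F) => [r r0|].
    have e1 : (4 + j.-1.+1 = k)%N by rewrite addnC addn4 jE.
    have e2 : (5 + j.-1 = k)%N by rewrite -[in RHS]jE.
    by rewrite e1 e2; exact: hflux2.
  exact: forcing_decay.
have [a [Phi [B [a0 [hPhi hB]]]]] := forcing_integrable j0.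
move: hflux2; rewrite j0 => hG.
pose G t := t ^+ 4 * derive1 P2 t.
have Ginc : forall x y, a < x -> x <= y -> G x <= G y.
  apply: derive1_ge0_le => r /(le_lt_trans a0) r0; first exact: (hG r r0).1.
  by rewrite (hG r r0).2 ltW // mulr_gt0 ?exprn_gt0 ?F_gt0.
have PhiG : forall x y, a < x -> x <= y -> Phi x - G x <= Phi y - G y.
  apply: derive1_ge0_le => r ar; have r0 := le_lt_trans a0 ar;
    have [dD dDE] := has_derive1B (derivable_has_derive1 (hPhi r ar).1) (hG r r0) => //.
  by rewrite dDE subr_ge0; exact: (hPhi r ar).2.
pose b := a + 1; have ab : a < b by rewrite ltrDl.
apply: (nondecr_bounded_tends_to (a := b) (B := B - Phi b + G b)).
  by move=> x y /(lt_trans ab); exact: Ginc.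
move=> x /ltW bx; have := PhiG b x ab bx; have := hB x (lt_le_trans ab bx).
rewrite /G; lra.
Qed.

Variables (c M0 : R).
Hypotheses (c_gt0 : 0 < c) (P0_ge : forall r, M0 < r -> c * r <= P0 r).

Lemma linear_growth : exists A, [/\ tends_to (fun r => r ^+ 2 * derive1 P1 r) A,
  tends_to (fun r => P0 r / r) (- A / k%:R) & 0 < - A / k%:R].
Proof.
have dP0' r : 0 < r -> derivable P0 r 1 by move=> /dP0[].
have dP1' r : 0 < r -> derivable P1 r 1 by move=> /dP1[].
have dP2' r : 0 < r -> derivable P2 r 1 by move=> /dP2[].
have [K tK] := flux2_cvg.
have t3 := lhopital0_pow (k := 2) dP2' P2_tends_to0 tK.
have tA := lhopital_flux (m := j.+1) (q := 2) (fun r r0 => hflux1 r0) t3.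
have tB := lhopital0_pow (k := 0) dP1' P1_tends_to0 tA.
have tC := lhopital_flux (m := j.+3) (q := 0) (fun r r0 => hflux0 r0) tB.
have tD : tends_to (fun r => P0 r / r) (- (- K / 3%:R / j.+2%:R) / k%:R).
  have tC' : tends_to (fun r => derive1 P0 r / r ^+ 0) (- (- K / 3%:R / j.+2%:R) / k%:R).
    by move: tC; rewrite divr1; apply: (tends_to_eq (a := 0)) => r _; rewrite expr0 mul1r divr1.
  have := lhopital_pow dP0' tC'; rewrite divr1.
  by apply: (tends_to_eq (a := 0)) => r _; rewrite expr1.
exists (- K / 3%:R / j.+2%:R); split => //.
apply: (lt_le_trans c_gt0); apply: (tends_to_ge (a := Num.max M0 0) tD) => r.
by rewrite gt_max => /andP[/P0_ge + r0]; rewrite ler_pdivlMr.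
Qed.

End RadialSystem.

Section Radial.
Variable R : realType.
Variable m : nat.
Local Notation n := m.+1.
Implicit Types (x y : 'rV[R]_n) (phi : 'rV[R]_n -> R).

Lemma e1E : @e1 R n = ebasis R ord0.
Proof. by apply/rowP => j; rewrite !mxE eq_sym. Qed.

Lemma sum_sqr_ge0 x : 0 <= \sum_i (x ord0 i) ^+ 2.
Proof. by apply: sumr_ge0 => i _; exact: sqr_ge0. Qed.

Lemma enorm_ge0 x : 0 <= enorm x.
Proof. exact: sqrtr_ge0. Qed.

Lemma enorm_sq x : enorm x ^+ 2 = \sum_i (x ord0 i) ^+ 2.
Proof. by rewrite sqr_sqrtr // sum_sqr_ge0. Qed.

Lemma enorm0 : enorm (0 : 'rV[R]_n) = 0.
Proof. by rewrite /enorm big1 ?sqrtr0 // => i _; rewrite mxE expr0n. Qed.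

Lemma enormZe1 r : enorm (r *: @e1 R n) = `|r|.
Proof.
rewrite e1E /enorm (bigD1 ord0) //= big1 ?addr0 ?mxE ?eqxx ?mulr1 ?sqrtr_sqr //.
by move=> i i0; rewrite !mxE eq_sym (negbTE i0) mulr0 expr0n.
Qed.

Lemma enormDZebasis (h : R) (i : 'I_n) y :
  enorm (h *: ebasis R i + y) = Num.sqrt (enorm y ^+ 2 + 2 * y ord0 i * h + h ^+ 2).
Proof.
rewrite /enorm sqr_sqrtr ?sum_sqr_ge0 //; congr Num.sqrt.
rewrite (bigD1 i) //= (bigD1 i (P := predT)) //= !mxE eqxx mulr1.
have -> : \sum_(j < n | j != i) (h *: ebasis R i + y) ord0 j ^+ 2 =
          \sum_(j < n | j != i) y ord0 j ^+ 2.
  by apply: eq_bigr => j ji; rewrite !mxE eq_sym (negbTE ji) mulr0 add0r.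
ring.
Qed.

Lemma normr_coord_le_enorm x (i : 'I_n) : `|x ord0 i| <= enorm x.
Proof.
rewrite -(sqrtr_sqr (x ord0 i)) /enorm ler_sqrt ?sum_sqr_ge0 //.
by rewrite (bigD1 i) //= lerDl; apply: sumr_ge0 => j _; exact: sqr_ge0.
Qed.

Lemma enorm_gt0 x : x != 0 -> 0 < enorm x.
Proof.
move=> x0; rewrite lt_def enorm_ge0 andbT; apply: contra x0 => /eqP x0.
apply/eqP/rowP => i; rewrite mxE.
by have := normr_coord_le_enorm x i; rewrite x0 normr_le0 => /eqP.
Qed.

Lemma enormZe1_neq0 (r : R) : 0 < r -> r *: @e1 R n != 0.
Proof.
move=> r0; apply: contraTneq r0 => /(congr1 (@enorm R n)).
by rewrite enormZe1 enorm0 => /normr0_eq0 ->; rewrite ltxx.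
Qed.

Lemma derive_line phi a v : 'D_v phi a = derive1 (fun h => phi (h *: v + a)) 0.
Proof.
rewrite /derive /derive1; set d := (fun _ : R => _); set d' := (fun _ : R => _).
by suff -> : d = d' by []; apply: funext => h; rewrite /d /d' /= addr0 scale0r add0r.
Qed.

Definition prof phi (r : R) := phi (r *: @e1 R n).

Lemma derive1_prof phi : derive1 (prof phi) = prof (partial ord0 phi).
Proof.
apply: funext => r; rewrite /prof /partial /derive /derive1 e1E.
set d := (fun _ : R => _); set d' := (fun _ : R => _).
by suff -> : d = d' by []; apply: funext => h; rewrite /d /d' /= scalerDl.
Qed.

Lemma derivable_prof phi r :
  derivable phi (r *: @e1 R n) (ebasis R ord0) -> derivable (prof phi) r 1.
Proof.
rewrite /derivable; set d := (fun _ : R => _); set d' := (fun _ : R => _).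
by suff -> : d' = d by []; apply: funext => h; rewrite /d /d' /prof /= e1E scalerDl /GRing.scale /= mulr1.
Qed.

Lemma enormDZebasis_gt0 (i : 'I_n) y (h : R) : `|h| < enorm y ->
  0 < enorm y ^+ 2 + 2 * y ord0 i * h + h ^+ 2.
Proof.
move=> hy; have cy := normr_coord_le_enorm y i; have h0 := normr_ge0 h.
have e1 : - (y ord0 i * h) <= enorm y * `|h|.
  by apply: le_trans (ler_norm _) _; rewrite normrN normrM; exact: ler_wpM2r.
rewrite -[h ^+ 2]real_normK ?num_real //; nra.
Qed.

Lemma near0_Zebasis_neq0 (i : 'I_n) y : y != 0 ->
  \forall h \near (0 : R), h *: ebasis R i + y != 0.
Proof.
move=> /enorm_gt0 y0; near=> h; apply/eqP => E.
suff : 0 < enorm (h *: ebasis R i + y) by rewrite E enorm0 ltxx.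
rewrite enormDZebasis sqrtr_gt0; apply: enormDZebasis_gt0.
by near: h; exact: (@nbhs0_lt R R^o _ y0).
Unshelve. all: by end_near.
Qed.

Lemma has_derive1_enorm_line (i : 'I_n) y : y != 0 ->
  has_derive1 (fun h => enorm (h *: ebasis R i + y)) 0 (y ord0 i / enorm y).
Proof.
move=> /enorm_gt0 s0; set s := enorm y in s0 *.
have -> : (fun h => enorm (h *: ebasis R i + y)) =
          (fun h => Num.sqrt (s ^+ 2 + 2 * y ord0 i * h + h ^+ 2)).
  by apply: funext => h; rewrite enormDZebasis.
have hQ := has_derive1D (has_derive1D (has_derive1_cst (s ^+ 2) 0)
  (has_derive1Ml (2 * y ord0 i) (has_derive1_id 0))) (has_derive1X 2 0).
have E : s ^+ 2 + 2 * y ord0 i * 0 + 0 ^+ 2 = s ^+ 2.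
  by rewrite mulr0 addr0 expr0n addr0.
have hS := has_derive1_sqrt (exprn_gt0 2 s0); rewrite -{1}E in hS.
have := has_derive1_comp hQ hS; congr has_derive1.
by rewrite sqrtr_sqr gtr0_norm //; field; exact: lt0r_neq0.
Qed.

Definition radial phi (p : R -> R) := forall z, z != 0 -> phi z = p (enorm z).

Lemma partial_radial phi p (i : 'I_n) y : radial phi p -> y != 0 ->
  derivable p (enorm y) 1 ->
  partial i phi y = derive1 p (enorm y) * (y ord0 i / enorm y).
Proof.
move=> rad y0 dp; rewrite /partial derive_line.
have hp : has_derive1 p (enorm (0 *: ebasis R i + y)) (derive1 p (enorm y)).
  by rewrite scale0r add0r; exact: derivable_has_derive1.
have near_eq : {near 0, (fun h => p (enorm (h *: ebasis R i + y))) =1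
                        (fun h => phi (h *: ebasis R i + y))}.
  by apply: filterS (near0_Zebasis_neq0 i y0) => h hne; rewrite rad.
by have [_ ->] := has_derive1_near near_eq
  (has_derive1_comp (has_derive1_enorm_line i y0) hp).
Qed.

Lemma partial2_radial phi p (i : 'I_n) x : radial phi p -> x != 0 ->
  (forall r, 0 < r -> derivable p r 1) -> derivable (derive1 p) (enorm x) 1 ->
  partial i (partial i phi) x =
  derive1 (derive1 p) (enorm x) * (x ord0 i / enorm x) ^+ 2 +
  derive1 p (enorm x) * ((enorm x)^-1 - (x ord0 i) ^+ 2 / enorm x ^+ 3).
Proof.
move=> rad x0 dp dp'; have s0 := enorm_gt0 x0; set s := enorm x in s0 dp' *.
rewrite {1}/partial derive_line.
have N0 : enorm (0 *: ebasis R i + x) = s by rewrite scale0r add0r.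
have hN := has_derive1_enorm_line i x0.
have hp : has_derive1 (derive1 p) (enorm (0 *: ebasis R i + x)) (derive1 (derive1 p) s).
  by rewrite N0; exact: derivable_has_derive1.
have hl : has_derive1 (fun h : R => h + x ord0 i) 0 1.
  by have := has_derive1D (has_derive1_id 0) (has_derive1_cst (x ord0 i) 0); rewrite addr0.
have Nne : enorm (0 *: ebasis R i + x) != 0 by rewrite N0 lt0r_neq0.
have hi := has_derive1V (f := fun h => enorm (h *: ebasis R i + x)) Nne hN.
have near_eq : {near 0, (fun h => derive1 p (enorm (h *: ebasis R i + x)) *
      ((h + x ord0 i) * (enorm (h *: ebasis R i + x))^-1)) =1
    (fun h => partial i phi (h *: ebasis R i + x))}.
  apply: filterS (near0_Zebasis_neq0 i x0) => h hne.
  rewrite (@partial_radial phi p i) //; last exact/dp/enorm_gt0.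
  by rewrite !mxE eqxx mulr1.
have [_ ->] := has_derive1_near near_eq
  (has_derive1M (has_derive1_comp hN hp) (has_derive1M hl hi)).
by rewrite N0 /= add0r -/s; field; exact: lt0r_neq0.
Qed.

Lemma lap_radial phi p x : radial phi p -> x != 0 ->
  (forall r, 0 < r -> derivable p r 1) -> derivable (derive1 p) (enorm x) 1 ->
  lap phi x = derive1 (derive1 p) (enorm x) + (n%:R - 1) / enorm x * derive1 p (enorm x).
Proof.
move=> rad x0 dp dp'; have s0 := enorm_gt0 x0; have ss := enorm_sq x.
set s := enorm x in s0 ss dp' *.
rewrite /lap (eq_bigr (fun i => (derive1 (derive1 p) s / s ^+ 2 - derive1 p s / s ^+ 3)
   * x ord0 i ^+ 2 + derive1 p s / s)); last first.
  by move=> i _; rewrite (partial2_radial i rad x0 dp dp') -/s; field; exact: lt0r_neq0.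
rewrite big_split /= -mulr_sumr -ss sumr_const card_ord -mulr_natr.
by field; exact: lt0r_neq0.
Qed.

Lemma partialD phi psi (i : 'I_n) : (forall x, derivable phi x (ebasis R i)) ->
  (forall x, derivable psi x (ebasis R i)) ->
  partial i (fun x => phi x + psi x) = (fun x => partial i phi x + partial i psi x).
Proof. by move=> d1 d2; apply: funext => x; rewrite /partial deriveD. Qed.

Lemma CkD k phi psi : Ck k phi -> Ck k psi -> Ck k (fun x => phi x + psi x).
Proof.
elim: k phi psi => [|k IH] phi psi /=.
  by move=> c1 c2 x; apply: continuousD; [exact: c1 | exact: c2].
move=> [c1 [d1 C1]] [c2 [d2 C2]]; split.
  by move=> x; apply: continuousD; [exact: c1 | exact: c2].
split; first by move=> i x; apply: derivableD.
by move=> i; rewrite partialD //; apply: IH.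
Qed.

Lemma Ck_cst k (c : R) : Ck k (fun _ : 'rV[R]_n => c).
Proof.
elim: k c => [|k IH] c /=; first exact: cst_continuous.
split; first exact: cst_continuous.
split; first by move=> i x; exact: derivable_cst.
move=> i; have -> : partial i (fun _ : 'rV[R]_n => c) = (fun=> 0).
  by apply: funext => x; rewrite /partial derive_cst.
exact: IH.
Qed.

Lemma Ck_sum k (F : 'I_n -> 'rV[R]_n -> R) (s : seq 'I_n) :
  (forall i, Ck k (F i)) -> Ck k (fun x => \sum_(i <- s) F i x).
Proof.
move=> CF; elim: s => [|a s IH].
  by under eq_fun do rewrite big_nil; exact: Ck_cst.
by under eq_fun do rewrite big_cons; exact: CkD.
Qed.

Lemma CkW k phi : Ck k.+1 phi -> Ck k phi.
Proof.
elim: k phi => [|k IH] phi; first by case.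
by move=> [c [d C]]; split => //; split => // i; exact: IH.
Qed.

Lemma Ck_lap k phi : Ck k.+2 phi -> Ck k (lap phi).
Proof. by move=> [_ [_ C]]; rewrite /lap; apply: Ck_sum => i; have [_ [_]] := C i; apply. Qed.

Lemma continuous_prof phi : continuous phi -> continuous (prof phi).
Proof.
move=> c r; apply: (@continuous_comp _ _ _ (fun s : R => s *: @e1 R n) phi).
  exact: scalel_continuous.
exact: c.
Qed.

Lemma prof_C2 phi : Ck 2 phi ->
  (forall r, derivable (prof phi) r 1 /\ derivable (derive1 (prof phi)) r 1) /\
  continuous (prof phi) /\ continuous (derive1 (prof phi)).
Proof.
move=> [c [d C]]; have [c1 [d1 _]] := C ord0.
rewrite derive1_prof; split; last by split; apply: continuous_prof.
by move=> r; split; apply: derivable_prof; [exact: d | exact: d1].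
Qed.

Lemma radial_prof (u : 'rV[R]_n -> R) :
  (forall x y, enorm x = enorm y -> u x = u y) -> radial u (prof u).
Proof. by move=> h z _; apply: h; rewrite enormZe1 ger0_norm // enorm_ge0. Qed.

Lemma radial_lap phi : Ck 2 phi -> radial phi (prof phi) ->
  radial (lap phi) (prof (lap phi)) /\ is_radlap m (prof phi) (prof (lap phi)).
Proof.
move=> C rad; have [dP _] := prof_C2 C.
have form x : x != 0 -> lap phi x = derive1 (derive1 (prof phi)) (enorm x) +
    m%:R / enorm x * derive1 (prof phi) (enorm x).
  move=> x0; rewrite (lap_radial rad x0 (fun r _ => (dP r).1) (dP _).2).
  by rewrite -natr1 addrK.
have hb : is_radlap m (prof phi) (prof (lap phi)).
  by move=> r r0; rewrite /prof form ?enormZe1_neq0 // enormZe1 gtr0_norm.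
by split => // z z0; rewrite form // hb //; exact: enorm_gt0.
Qed.

Lemma radial_tends_to phi p (h : R -> R -> R) L : radial phi p ->
  tends_to (fun r => h (p r) r) L -> forall eps, 0 < eps ->
  exists M, forall x, M < enorm x -> `|h (phi x) (enorm x) - L| < eps.
Proof.
move=> rad hL eps /hL[M hM]; exists (Num.max M 0) => x.
rewrite gt_max => /andP[Mx x0]; rewrite rad; first exact: hM.
by apply: contraTneq x0 => ->; rewrite enorm0 ltxx.
Qed.

End Radial.

Section Forcing.
Variable R : realType.
Implicit Types (P W V : R -> R).

(* [t^2 (Delta^2 u - (n - 3)/t (Delta u)')] is the derivative of [t^2 (Delta u)'] on
   [(0, +oo)]; [W] and [V] only need to agree with [P1'] and [P2] there. *)
Lemma Rintegral_flux_cvg k W V (P1 P2 : R -> R) A :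
  (forall t, 0 < t -> derive1 W t = derive1 P1 t) -> (forall t, 0 < t -> V t = P2 t) ->
  derivable2_pos P1 -> is_radlap k P1 P2 -> continuous P2 -> continuous (derive1 P1) ->
  tends_to (fun r => r ^+ 2 * derive1 P1 r) A ->
  Rintegral lebesgue_measure `[0, M]
    (fun t => t ^+ 2 * (V t - (k.+1%:R - 3) / t * derive1 W t)) @[M --> +oo] --> A.
Proof.
move=> hW hV dP1 P12 cP2 cP1 tA.
set g := fun t => t ^+ 2 * (V t - (k.+1%:R - 3) / t * derive1 W t).
pose F t := t ^+ 2 * derive1 W t; pose F1 t := t ^+ 2 * derive1 P1 t.
pose gc t := t ^+ 2 * P2 t - (k.+1%:R - 3) * t * derive1 P1 t.
have hF1 t : 0 < t -> has_derive1 F1 t (2%:R * t * derive1 P1 t +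
    t ^+ 2 * derive1 (derive1 P1) t).
  move=> t0; have := has_derive1M (has_derive1X 2 t) (derivable_has_derive1 (dP1 t t0).2).
  by rewrite expr1.
have hF t : 0 < t -> has_derive1 F t (2%:R * t * derive1 P1 t +
    t ^+ 2 * derive1 (derive1 P1) t).
  move=> t0; apply: has_derive1_near (hF1 t t0); near=> s.
  by rewrite /F /F1 hW //; near: s; exact: lt_nbhsr.
have cgc : continuous gc.
  move=> t; apply: cvgB; first by apply: cvgM; [exact: exprn_continuous | exact: cP2].
  by apply: cvgM; [apply: cvgM; [exact: cvg_cst | exact: cvg_id] | exact: cP1].
have cF1 : continuous F1 by move=> t; apply: cvgM; [exact: exprn_continuous | exact: cP1].
have intE M : 0 < M -> Rintegral lebesgue_measure `[0, M] g = F M.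
  move=> M0; rewrite /Rintegral (@continuous_FTC2 R g F 0 M M0).
  - by rewrite -EFinB /= /F expr0n /= mul0r subr0.
  - apply: (@subspace_eq_continuous _ _ _ gc g); last exact: continuous_subspaceT.
    move=> t; rewrite inE /= in_itv /= => /andP[+ _].
    rewrite le_eqVlt => /predU1P[<-|t0].
      by rewrite /g /gc expr0n /= !mul0r mulr0 !mul0r subrr.
    by rewrite /g /gc hV // hW //; field; exact: lt0r_neq0.
  - split.
    + by move=> t; rewrite in_itv /= => /andP[t0 _]; exact: (hF t t0).1.
    + have -> : F 0 = F1 0 by rewrite /F /F1 expr0n /= !mul0r.
      apply: cvg_trans (cvg_at_right_filter (cF1 0)).
      apply: near_eq_cvg; apply: filterS (@nbhs_right_gt R 0) => s s0.
      by rewrite /F /F1 hW.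
    + apply/cvg_at_left_filter/differentiable_continuous/derivable1_diffP.
      exact: (hF M M0).1.
  - move=> t; rewrite in_itv /= => /andP[t0 _].
    by rewrite (hF t t0).2 /g hV // hW // P12 //; field; exact: lt0r_neq0.
apply/tends_toE; apply: (tends_to_eq (a := 0)) tA => M M0.
by rewrite intE // /F hW.
Unshelve. all: by end_near.
Qed.

Lemma powRN_le (a b q : R) : 0 < a -> a <= b -> 0 < q -> b `^ (- q) <= a `^ (- q).
Proof.
move=> a0 ab q0; rewrite !powRN lef_pV2 ?posrE ?powR_gt0 ?(lt_le_trans a0) //.
by apply: ge0_ler_powR => //; rewrite ?nnegrE ltW // (lt_le_trans a0).
Qed.

Lemma exprMpowRN (c r q : R) (k : nat) : 0 < c -> 0 < r ->
  r ^+ k * (c * r) `^ (- q) = c `^ (- q) * r `^ (k%:R - q).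
Proof.
move=> c0 r0; rewrite powRM ?ltW // -powR_mulrn ?ltW // mulrCA -powRD //.
by apply/implyP => _; exact: lt0r_neq0.
Qed.

Variables (P : R -> R) (q c M : R).
Hypotheses (q_gt5 : 5 < q) (c_gt0 : 0 < c) (P_ge : forall r, M < r -> c * r <= P r).

Let P_ge' r : Num.max M 0 < r -> 0 < r /\ c * r <= P r.
Proof. by rewrite gt_max => /andP[/P_ge ? ?]. Qed.

Let forcing_le r : Num.max M 0 < r -> P r `^ (- q) <= (c * r) `^ (- q).
Proof.
move=> /P_ge'[r0 lr]; apply: powRN_le lr _; first exact: mulr_gt0.
exact: lt_trans q_gt5.
Qed.

Lemma forcing_decay : tends_to (fun r => r ^+ 5 * P r `^ (- q)) 0.
Proof.
have q50 : 0 < q - 5 by rewrite subr_gt0.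
have tg : tends_to (fun r => c `^ (- q) * r `^ (5%:R - q)) 0.
  have := tends_toMl (c `^ (- q)) (tends_to_pinfty_inv (tends_to_pinfty_powR q50)).
  by rewrite mulr0; apply: (tends_to_eq (a := 0)) => r r0; rewrite -powRN opprB.
apply: (tends_to_squeeze0 (a := Num.max M 0) tg) => r /[dup] /P_ge'[r0 _] /forcing_le.
rewrite mulr_ge0 ?exprn_ge0 ?powR_ge0 ?(ltW r0) //= -(exprMpowRN q 5 c_gt0 r0).
by rewrite ler_pM2l ?exprn_gt0.
Qed.

(* A primitive of the bound [r^4 (c r)^(-q)] that stays below [0]. *)
Lemma forcing_integrable : exists a (Phi : R -> R) B, 0 <= a /\
  (forall r, a < r -> derivable Phi r 1 /\ r ^+ 4 * P r `^ (- q) <= derive1 Phi r) /\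
  (forall r, a < r -> Phi r <= B).
Proof.
have q5 : 5 - q != 0 by rewrite subr_eq0 lt_eqF.
exists (Num.max M 0), (fun r => c `^ (- q) / (5 - q) * r `^ (5 - q)), 0.
split; first by rewrite le_max lexx orbT.
split => r /[dup] /P_ge'[r0 _] ar.
  have hP := has_derive1Ml (c `^ (- q) / (5 - q)) (has_derive1_powR (5 - q) r0).
  split; first exact: hP.1.
  rewrite hP.2 (le_trans (_ : _ <= r ^+ 4 * (c * r) `^ (- q))) //.
    by rewrite ler_pM2l ?exprn_gt0 // forcing_le.
  rewrite exprMpowRN // (_ : 5 - q - 1 = 4%:R - q); last by lra.
  by rewrite le_eqVlt; apply/orP; left; apply/eqP; field.
apply: mulr_le0_ge0; last exact: powR_ge0.
by apply: mulr_ge0_le0; [exact: powR_ge0 | rewrite invr_le0 subr_le0 ltW].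
Qed.

End Forcing.

Section RadialSolution.
Variables (R : realType) (j : nat) (q rho c M : R) (u : 'rV[R]_(j.+4.+1) -> R).
Hypotheses (q_gt5 : 5 < q) (Cu : Ck 6 u) (u_gt0 : forall x, 0 < u x).
Hypothesis u_radial : forall x y, enorm x = enorm y -> u x = u y.
Hypothesis u_pde : forall x, lap (lap (lap u)) x = u x `^ (- q).
Hypotheses (c_gt0 : 0 < c) (u_ge : forall x, M < enorm x -> c <= u x / enorm x).
Hypothesis u''_cvg : tends_to (derive1 (derive1 (prof u))) rho.

Local Notation P0 := (prof u).
Local Notation P1 := (prof (lap u)).
Local Notation P2 := (prof (lap (lap u))).

Let C2u : Ck 2 u := CkW (CkW (CkW (CkW Cu))).
Let C4lu : Ck 4 (lap u) := Ck_lap Cu.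
Let C2lu : Ck 2 (lap u) := CkW (CkW C4lu).
Let C2llu : Ck 2 (lap (lap u)) := Ck_lap C4lu.

Let dP0 : derivable2_pos P0 := fun r _ => (prof_C2 C2u).1 r.
Let dP1 : derivable2_pos P1 := fun r _ => (prof_C2 C2lu).1 r.
Let dP2 : derivable2_pos P2 := fun r _ => (prof_C2 C2llu).1 r.

Lemma profiles_radlap : [/\ is_radlap j.+4 P0 P1, is_radlap j.+4 P1 P2 &
  is_radlap j.+4 P2 (fun r => P0 r `^ (- q))].
Proof.
have [rad1 P01] := radial_lap C2u (radial_prof u_radial).
have [rad2 P12] := radial_lap C2lu rad1.
have [_ P23] := radial_lap C2llu rad2.
split => [||r r0]; [exact: P01 | exact: P12 |].
by rewrite -P23 // /prof u_pde.
Qed.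

Lemma P0_ge r : Num.max M 0 < r -> c * r <= P0 r.
Proof.
rewrite gt_max => /andP[Mr r0]; rewrite -ler_pdivlMr //.
by have := @u_ge (r *: e1 R j.+4.+1); rewrite enormZe1 gtr0_norm //; apply.
Qed.

Lemma rho_ge0 : 0 <= rho.
Proof.
have [_ t2] := tends_to_derive1_ratios dP0 u''_cvg.
suff : 0 <= rho / 2 by rewrite pmulr_lge0 // invr_gt0.
apply: (tends_to_ge (a := Num.max M 0) t2) => r /[dup] /P0_ge cP0.
rewrite gt_max => /andP[_ r0]; apply: divr_ge0 (sqr_ge0 r).
exact: le_trans (mulr_ge0 (ltW c_gt0) (ltW r0)) cP0.
Qed.

Lemma quadratic_growth eps : 0 < eps ->
  exists M', forall x, M' < enorm x -> `|u x / enorm x ^+ 2 - rho / 2| < eps.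
Proof.
have [_ t2] := tends_to_derive1_ratios dP0 u''_cvg.
exact: (radial_tends_to (h := fun v r => v / r ^+ 2) (radial_prof u_radial) t2).
Qed.

Lemma linear_growth_rate : rho = 0 -> exists I : R,
  (Rintegral lebesgue_measure `[0, M'] (fun t => t ^+ 2 *
     (radlap j.+4.+1 (radlap j.+4.+1 P0) t - (j.+4.+1%:R - 3) / t * derive1 (radlap j.+4.+1 P0) t))
     @[M' --> +oo] --> I) /\
  0 < - I / (j.+4.+1%:R - 1) /\
  forall eps, 0 < eps -> exists M', forall x, M' < enorm x ->
    `|u x / enorm x - (- I / (j.+4.+1%:R - 1))| < eps.
Proof.
move=> rho0; have [P01 P12 P2F] := profiles_radlap.
have F_gt0 r : 0 < r -> 0 < P0 r `^ (- q) by move=> _; apply: powR_gt0; exact: u_gt0.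
have [_ [_ cP2']] := prof_C2 C2llu; have [_ [cP1 cP1']] := prof_C2 C2lu.
have [A [tA tP Apos]] := linear_growth dP0 dP1 dP2 P01 P12 P2F F_gt0
  (tends_to0_at0 j.+3 (cP2' 0)) (ltac:(by rewrite -rho0))
  (forcing_decay q_gt5 c_gt0 P0_ge) (fun _ => forcing_integrable q_gt5 c_gt0 P0_ge)
  c_gt0 P0_ge.
have nk : (j.+4.+1%:R - 1 : R) = j.+4%:R by rewrite -natr1 addrK.
exists A; rewrite nk; split.
  apply: (Rintegral_flux_cvg _ _ dP1 P12 _ cP1' tA) => [t t0|t t0|].
  - exact (derive1_radlap_pos (ltn0Sn _) dP0 P01 t0).
  - exact (radlap2_pos (ltn0Sn _) dP0 dP1 P01 P12 t0).
  - by have [_ []] := prof_C2 C2llu.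
split => //; exact: (radial_tends_to (h := fun v r => v / r) (radial_prof u_radial) tP).
Qed.

End RadialSolution.

Unset Implicit Arguments. Set Strict Implicit.

Theorem mainTheorem8 (R : realType) (n : nat) (q rho : R)
  (u : 'rV[R]_n -> R) :
  (5 <= n)%N -> 5 < q ->
  Ck 6 u ->
  (forall x, 0 < u x) ->
  (forall x y, enorm x = enorm y -> u x = u y) ->
  (forall x, lap (lap (lap u)) x = powR (u x) (- q)) ->
  (exists c : R, 0 < c /\ exists M : R, forall x, M < enorm x -> c <= u x / enorm x) ->
  (derive1 (derive1 (fun r : R => u (r *: @e1 R n))) r @[r --> +oo] --> rho) ->
  0 <= rho /\
  (0 < rho ->
     forall eps : R, 0 < eps -> exists M : R, forall x, M < enorm x ->
       `| u x / enorm x ^+ 2 - rho / 2 | < eps) /\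
  (rho = 0 ->
     let ub := fun r : R => u (r *: @e1 R n) in
     let g := fun t : R =>
       t ^+ 2 * (radlap n (radlap n ub) t
                 - (n%:R - 3) / t * derive1 (radlap n ub) t) in
     exists I : R,
       (Rintegral lebesgue_measure `[0, M] g @[M --> +oo] --> I) /\
       0 < - I / (n%:R - 1) /\
       forall eps : R, 0 < eps -> exists M : R, forall x, M < enorm x ->
         `| u x / enorm x - (- I / (n%:R - 1)) | < eps).
Proof.
move=> n5; have [j nE] : exists j, n = j.+4.+1.
  by exists (n - 5)%N; rewrite -[in LHS](subnK n5) addnC.
subst n.
move=> q5 Cu u_gt0 u_rad u_pde [c [c0 [M u_ge]]] /tends_toE u''_cvg.
split; first exact: rho_ge0 Cu c0 u_ge u''_cvg.
split; first by move=> _; exact: quadratic_growth Cu u_rad u''_cvg.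
exact: linear_growth_rate q5 Cu u_gt0 u_rad u_pde c0 u_ge u''_cvg.
Qed.
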